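(* For $i=1,2$ let $1\to K_i\xrightarrow{\iota_i}A_i\xrightarrow{\pi_i}H_i\to1$ be exact sequences of Hopf algebras such that $\iota_i(K_i)=\mathcal{HZ}(A_i)$. Suppose $\omega:A_1\to A_2$ is a Hopf algebra isomorphism. Then there exist Hopf algebra isomorphisms $\underline\omega:K_1\to K_2$ and $\overline\omega:H_1\to H_2$ such that $\iota_2\underline\omega=\omega\iota_1$ and $\pi_2\omega=\overline\omega\pi_1$.
   Context: Hopf algebras over a field $k$, with bijective antipode. A sequence $1\to B\xrightarrow{\iota}A\xrightarrow{\pi}H\to1$ of Hopf algebra maps is exact if $\iota$ is injective, $\pi$ surjective, $\operatorname{Ker}\pi=AB^+$ ($B^+=\operatorname{Ker}\varepsilon$) and $B={}^{\mathrm{co}\,\pi}A=\{a:(\pi\otimes\mathrm{id})\Delta(a)=1\otimes a\}$. The Hopf center $\mathcal{HZ}(A)$ is the maximal central Hopf subalgebra of $A$. *)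

From HB Require Import structures.
From mathcomp Require Import all_boot all_order all_algebra.
Set Implicit Arguments.
Unset Strict Implicit.
Unset Printing Implicit Defensive.
Import Order.TTheory GRing.Theory.
Local Open Scope ring_scope.

(* MathComp has no tensor product, so an
   element of U (x) V is represented by a finite list of pure tensors
   [:: (u_1, v_1); ...] (meaning sum_i u_i (x) v_i), and two such lists are
   identified when they represent the same element of U (x) V.  Over a field,
   the canonical map U (x) V -> dual of (dual U tensor dual V) (bilinear forms on dual pairs) is
   injective, so two representatives are equal in U (x) V iff they agree
   against every pair of linear functionals. *)

Section Tensors.
Variable k : fieldType.

Definition tpair (U V : lmodType k) (f : {scalar U}) (g : {scalar V})
  (t : seq (U * V)) : k := \sum_(p <- t) f p.1 * g p.2.

Definition teq (U V : lmodType k) (t u : seq (U * V)) : Prop :=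
  forall (f : {scalar U}) (g : {scalar V}), tpair f g t = tpair f g u.

Definition teq3 (U V W : lmodType k) (t u : seq (U * V * W)) : Prop :=
  forall (f : {scalar U}) (g : {scalar V}) (h : {scalar W}),
    \sum_(p <- t) f p.1.1 * g p.1.2 * h p.2
    = \sum_(p <- u) f p.1.1 * g p.1.2 * h p.2.

Definition tin (U V : lmodType k) (P : U -> Prop) (Q : V -> Prop)
  (t : seq (U * V)) : Prop :=
  exists u : seq (U * V), (forall p, p \in u -> P p.1 /\ Q p.2) /\ teq t u.

Definition klinear (U V : lmodType k) (f : U -> V) : Prop :=
  forall (a : k) (x y : U), f (a *: x + y) = a *: f x + f y.

Definition tmap (U V U' V' : Type) (f : U -> U') (g : V -> V')
  (t : seq (U * V)) : seq (U' * V') := [seq (f p.1, g p.2) | p <- t].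

Record hopf_alg (A : algType k) := HopfAlg {
  comul : A -> seq (A * A);
  counit : A -> k;
  antipode : A -> A;
  comul_lin : forall (a : k) (x y : A),
    teq (comul (a *: x + y)) ([seq (a *: p.1, p.2) | p <- comul x] ++ comul y);
  comul1 : teq (comul 1) [:: (1, 1)];
  comulM : forall x y : A,
    teq (comul (x * y))
        [seq (p.1 * q.1, p.2 * q.2) | p <- comul x, q <- comul y];
  coassoc : forall x : A,
    teq3 [seq (q.1, q.2, p.2) | p <- comul x, q <- comul p.1]
         [seq (p.1, q.1, q.2) | p <- comul x, q <- comul p.2];
  counit_lin : klinear (counit : A -> k^o);
  counit1 : counit 1 = 1;
  counitM : forall x y, counit (x * y) = counit x * counit y;
  counitL : forall x, \sum_(p <- comul x) counit p.1 *: p.2 = x;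
  counitR : forall x, \sum_(p <- comul x) counit p.2 *: p.1 = x;
  antipode_lin : klinear antipode;
  antipodeL : forall x, \sum_(p <- comul x) antipode p.1 * p.2 = (counit x)%:A;
  antipodeR : forall x, \sum_(p <- comul x) p.1 * antipode p.2 = (counit x)%:A;
  antipode_bij : bijective antipode
}.

Section HopfNotions.
Variables (A B : algType k) (HA : hopf_alg A) (HB : hopf_alg B).

(* Hopf algebra map (= bialgebra map; it then commutes with antipodes) *)
Definition hopf_map (f : A -> B) : Prop :=
  [/\ klinear f, f 1 = 1, (forall x y, f (x * y) = f x * f y),
      (forall x, teq (comul HB (f x)) (tmap f f (comul HA x)))
    & (forall x, counit HB (f x) = counit HA x)].

Definition hopf_iso (f : A -> B) : Prop := hopf_map f /\ bijective f.

End HopfNotions.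

Section Exact.
Variables (K A H : algType k) (HK : hopf_alg K) (HA : hopf_alg A) (HH : hopf_alg H).

Definition coinv (pi : A -> H) (a : A) : Prop :=
  teq (tmap pi id (comul HA a)) [:: (1, a)].

(* elements of the left ideal A B^+, with B = iota(K) *)
Definition in_AKplus (iota : K -> A) (x : A) : Prop :=
  exists s : seq (A * K), (forall p, p \in s -> counit HK p.2 = 0) /\
    x = \sum_(p <- s) p.1 * iota p.2.

Definition exact_seq (iota : K -> A) (pi : A -> H) : Prop :=
  [/\ hopf_map HK HA iota, hopf_map HA HH pi, injective iota, (forall h : H, exists a, pi a = h)
    & ((forall x, pi x = 0 <-> in_AKplus iota x) /\
       (forall a, (exists b, a = iota b) <-> coinv pi a))].

End Exact.

Section HopfCenter.
Variables (A : algType k) (HA : hopf_alg A).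

Definition central_hopf_subalg (P : A -> Prop) : Prop :=
  [/\ P 1, (forall (a : k) x y, P x -> P y -> P (a *: x + y)),
      (forall x y, P x -> P y -> P (x * y)),
      (forall x, P x -> tin P P (comul HA x) /\ P (antipode HA x))
    & (forall x y, P x -> x * y = y * x)].

Definition is_hopf_center (P : A -> Prop) : Prop :=
  central_hopf_subalg P /\
  (forall Q, central_hopf_subalg Q -> forall x, Q x -> P x).

End HopfCenter.

End Tensors.

From HB Require Import structures.
From mathcomp Require Import all_boot all_order all_algebra.
From mathcomp Require Import boolp classical_sets functions.
Set Implicit Arguments.
Unset Strict Implicit.
Unset Printing Implicit Defensive.
Import Order.TTheory GRing.Theory.
Local Open Scope ring_scope.
Local Open Scope classical_set_scope.

(* The Hopf center is intrinsic: it is the largest central Hopf subalgebra, and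
   the image of a central Hopf subalgebra under a Hopf isomorphism is again one
   (Hopf maps commute with antipodes).  Hence omega maps iota1(K1) onto
   iota2(K2), which gives omega_u.  As Ker pi_i = A_i iota_i(K_i)^+, omega then
   maps Ker pi1 onto Ker pi2 and descends to omega_o on the quotients.
   Tensors are lists of pure tensors compared against pairs of scalars; the
   linear algebra needed is that such an equality is respected by every
   bilinear map, which holds because, by Zorn's lemma, scalars separate a vector
   from any subspace avoiding it. *)

Section KLinear.
Variables (k : fieldType) (U V : lmodType k) (f : U -> V).
Hypothesis fl : klinear f.

Definition linear_of_klinear : {linear U -> V} :=
  HB.pack_for {linear U -> V} f (GRing.isLinear.Build k U V *:%R f fl).

Lemma klinear0 : f 0 = 0. Proof. exact: (linear0 linear_of_klinear). Qed.

Lemma klinearZ a x : f (a *: x) = a *: f x.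
Proof. exact: (linearZZ linear_of_klinear). Qed.

Lemma klinearN x : f (- x) = - f x.
Proof. exact: (linearN linear_of_klinear). Qed.

Lemma klinearB x y : f (x - y) = f x - f y.
Proof. exact: (linearB linear_of_klinear). Qed.

Lemma klinear_sum (I : Type) (r : seq I) (P : pred I) (E : I -> U) :
  f (\sum_(j <- r | P j) E j) = \sum_(j <- r | P j) f (E j).
Proof. exact: (linear_sum linear_of_klinear). Qed.

End KLinear.

Section Separation.
Variables (k : fieldType) (U : lmodType k).

Definition lin_closed (M : set U) := forall a u v, M u -> M v -> M (a *: u + v).

(* The empty set is admitted as a candidate only because Zorn's lemma needs
   the union of the empty chain to be one. *)
Lemma maximal_avoiding (T : set U) (x : U) :
  T 0 -> lin_closed T -> ~ T x ->
  exists A : set U, [/\ lin_closed A, T `<=` A, ~ A x &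
    forall B, lin_closed B -> A `<` B -> B x].
Proof.
move=> T0 Tcl Tx.
pose P M := [/\ lin_closed M, ~ M x & M = set0 \/ T `<=` M].
have [A [[Acl Ax AT] Amax]] : exists A, P A /\ forall B, A `<` B -> ~ P B.
  apply: Zorn_bigcup => F FP Ftot; split.
  - move=> a u v [X1 FX1 X1u] [X2 FX2 X2v].
    have [X12|X21] := Ftot _ _ FX1 FX2.
      by exists X2 => //; have [cl _ _] := FP _ FX2; apply: cl => //; apply: X12.
    by exists X1 => //; have [cl _ _] := FP _ FX1; apply: cl => //; apply: X21.
  - by move=> [X FX Xx]; have [_ nx _] := FP _ FX.
  - have [[X [FX TX]]|nX] := pselect (exists X, F X /\ T `<=` X).
      by right => t Tt; exists X => //; apply: TX.
    left; apply/seteqP; split => // u [X FX Xu].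
    have [_ _ [X0|TX]] := FP _ FX; first by rewrite X0 in Xu.
    by case: nX; exists X.
have TA : T `<=` A.
  case: AT => // A0; case: (Amax T); last by split => //; right.
  by rewrite A0; split => // /(_ 0 T0).
exists A; split => // B Bcl AB; apply: contrapT => Bx; apply: (Amax B AB).
by split => //; right; apply: subset_trans TA (properW AB).
Qed.

Lemma hyperplane_avoiding (T : set U) (x : U) :
  T 0 -> lin_closed T -> ~ T x ->
  exists A : set U,
    [/\ lin_closed A, T `<=` A, ~ A x & forall v, exists c, A (v - c *: x)].
Proof.
move=> T0 Tcl Tx; have [A [Acl TA Ax Amax]] := maximal_avoiding T0 Tcl Tx.
exists A; split => // v; apply: contrapT => nv.
pose B w := exists c m, A m /\ w = m + c *: v.
have AB : A `<` B.
  split; first by move=> u Au; exists 0, u; rewrite scale0r addr0.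
  move=> BA; apply: nv; exists 0; rewrite scale0r subr0.
  by apply: BA; exists 1, 0; rewrite add0r scale1r; split => //; apply: TA.
have [c [m [Am xE]]] : B x.
  apply: Amax AB => a u w [c1 [m1 [Am1 ->]]] [c2 [m2 [Am2 ->]]].
  exists (a * c1 + c2), (a *: m1 + m2); split; first exact: Acl.
  by rewrite scalerDr scalerDl scalerA addrACA.
have [c0|cn0] := eqVneq c 0; first by apply: Ax; rewrite xE c0 scale0r addr0.
apply: nv; exists c^-1.
have -> : v - c^-1 *: x = (- c^-1) *: m + 0.
  rewrite xE scalerDr scalerA mulVf // scale1r addr0 scaleNr.
  by rewrite opprD addrCA subrr addr0.
by apply: Acl => //; apply: TA.
Qed.

Lemma separating_scalar (T : set U) (x : U) :
  T 0 -> lin_closed T -> ~ T x ->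
  exists F : {scalar U}, (forall t, T t -> F t = 0) /\ F x = 1.
Proof.
move=> T0 Tcl Tx; have [A [Acl TA Ax Adec]] := hyperplane_avoiding T0 Tcl Tx.
have coord_uniq v c c' : A (v - c *: x) -> A (v - c' *: x) -> c = c'.
  move=> Ac Ac'; apply: contrapT => ncc; apply: Ax.
  have -> : x = (c' - c)^-1 *: ((-1) *: (v - c' *: x) + (v - c *: x)) + 0.
    rewrite scaleN1r opprB addrA subrK -scalerBl scalerA mulVf ?scale1r ?addr0 //.
    by rewrite subr_eq0 eq_sym; apply/eqP.
  by apply: (Acl); [apply: (Acl) | apply: TA].
pose F v := sval (cid (Adec v)).
have FP v : A (v - F v *: x) by rewrite /F; case: cid.
have Fl : klinear (F : U -> k^o).
  move=> a u w; apply: (coord_uniq (a *: u + w) _ (a * F u + F w)).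
    exact: FP.
  have -> : a *: u + w - (a * F u + F w) *: x
          = a *: (u - F u *: x) + (w - F w *: x).
    by rewrite scalerDl -scalerA scalerBr opprD addrACA.
  by apply: Acl; apply: FP.
exists (linear_of_klinear Fl); split => [t Tt|] /=.
  by apply: (coord_uniq t); [apply: FP | rewrite scale0r subr0; apply: TA].
by apply: (coord_uniq x); [apply: FP | rewrite scale1r subrr; apply: TA].
Qed.

Lemma scalars_separate (v : U) : (forall F : {scalar U}, F v = 0) -> v = 0.
Proof.
move=> Fv0; apply: contrapT => nv.
have [|||F [_ Fv]] := @separating_scalar (fun w => w = 0) v => //.
  by move=> a u w -> ->; rewrite scaler0 addr0.
by have := Fv0 F; rewrite Fv => /eqP; rewrite oner_eq0.
Qed.

End Separation.

Lemma sum_fold_dependent (k : fieldType) (U Y Z : lmodType k) (g : U -> Y -> Z)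
  n (X : nat -> U) (Yf : nat -> Y) (c : nat -> k) :
  klinear (g^~ (Yf n)) -> (forall x, klinear (g x)) ->
  X n = \sum_(l < n) c l *: X l ->
  \sum_(l < n) g (X l) (c l *: Yf n + Yf l) = \sum_(l < n.+1) g (X l) (Yf l).
Proof.
move=> gl gr Xn; rewrite big_ord_recr /= [RHS]addrC.
under eq_bigr do rewrite gr.
rewrite big_split /=; congr (_ + _).
rewrite Xn (klinear_sum gl); apply: eq_bigr => l _.
by apply/esym; exact: (klinearZ gl).
Qed.

Section BilinearCriterion.
Variables (k : fieldType) (U U' Y Z : lmodType k) (i : U -> U') (S : set Y).
Hypotheses (il : klinear i) (i_inj : injective i) (Scl : lin_closed S).
Variable beta : U -> Y -> Z.
Hypotheses (betal : forall y, S y -> klinear (beta^~ y))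
           (betar : forall x, klinear (beta x)).

(* Induction on n: a dependent X n is absorbed into the other terms, while an
   independent one is detected by a scalar, which forces Yf n = 0. *)
Lemma bilinear_sum_eq0 n (X : nat -> U) (Yf : nat -> Y) :
  (forall l, (l < n)%N -> S (Yf l)) ->
  (forall F : {scalar U'}, \sum_(l < n) F (i (X l)) *: Yf l = 0) ->
  \sum_(l < n) beta (X l) (Yf l) = 0.
Proof.
elim: n X Yf => [|n IH] X Yf SY Fsum0; first by rewrite big_ord0.
have SYn : S (Yf n) by apply: SY.
have [[c Xn]|Xn_indep] :=
  pselect (exists c : nat -> k, X n = \sum_(l < n) c l *: X l).
  rewrite -(@sum_fold_dependent _ _ _ _ beta _ _ _ c) //; last exact: betal.
  apply: (IH X (fun l => c l *: Yf n + Yf l)) => [l ln|F].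
    by apply: Scl => //; apply/SY/ltnW.
  rewrite (@sum_fold_dependent _ _ _ _ (fun u y => F (i u) *: y)) //.
  - by move=> a u u'; rewrite il linearP /= scalerDl scalerA.
  - by move=> u a y y'; rewrite scalerDr !scalerA mulrC.
pose T v := exists c : nat -> k, v = \sum_(l < n) c l *: i (X l).
have T0 : T 0 by exists (fun _ => 0); rewrite big1 // => l _; rewrite scale0r.
have Tcl : lin_closed T.
  move=> a u v [c1 ->] [c2 ->]; exists (fun l => a * c1 l + c2 l).
  rewrite scaler_sumr -big_split /=; apply: eq_bigr => l _.
  by rewrite scalerDl scalerA.
have nT : ~ T (i (X n)).
  move=> [c Xn]; apply: Xn_indep; exists c; apply: i_inj.
  by rewrite Xn (klinear_sum il); apply: eq_bigr => l _; rewrite (klinearZ il).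
have [F [FT FXn]] := separating_scalar T0 Tcl nT.
have FX (l : 'I_n) : F (i (X l)) = 0.
  apply: FT; exists (fun m : nat => (m == l)%:R).
  rewrite (bigD1 l) //= eqxx scale1r big1 ?addr0 // => m ml.
  by rewrite -val_eqE in ml; rewrite /= (negbTE ml) scale0r.
have Yn0 : Yf n = 0.
  have := Fsum0 F; rewrite big_ord_recr /= big1 ?add0r ?FXn ?scale1r //.
  by move=> l _; rewrite FX scale0r.
rewrite big_ord_recr /= Yn0 (klinear0 (betar _)) addr0.
apply: IH => [l ln|G]; first by apply/SY/ltnW.
by have := Fsum0 G; rewrite big_ord_recr /= Yn0 scaler0 addr0.
Qed.

Lemma bilinear_seq_sum_eq0 (d : seq (U * Y)) :
  (forall p, p \in d -> S p.2) ->
  (forall F : {scalar U'}, \sum_(p <- d) F (i p.1) *: p.2 = 0) ->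
  \sum_(p <- d) beta p.1 p.2 = 0.
Proof.
move=> Sd Fsum0; rewrite (big_nth (0, 0)) big_mkord.
apply: (@bilinear_sum_eq0 _ (fun l => (nth (0, 0) d l).1)
  (fun l => (nth (0, 0) d l).2)) => [l ld|F]; first by apply: Sd; rewrite mem_nth.
by have := Fsum0 F; rewrite (big_nth (0, 0)) big_mkord.
Qed.

End BilinearCriterion.

Definition tdiff (T : Type) (V : zmodType) (t u : seq (T * V)) :=
  t ++ [seq (p.1, - p.2) | p <- u].

Lemma big_tdiff (T : Type) (V Z : zmodType) (g : T * V -> Z)
  (t u : seq (T * V)) :
  (forall p, g (p.1, - p.2) = - g p) ->
  \sum_(p <- tdiff t u) g p = \sum_(p <- t) g p - \sum_(p <- u) g p.
Proof.
move=> gN; rewrite big_cat big_map -sumrN; congr (_ + _).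
by apply: eq_bigr => p _; rewrite gN.
Qed.

Section TensorMap.
Variables (U V U' V' : Type).

Lemma tmap_id (t : seq (U * V)) : tmap id id t = t.
Proof. by rewrite /tmap; elim: t => //= -[a b] t ->. Qed.

Lemma tmap_comp (U'' V'' : Type) (f : U -> U') (g : V -> V') (f' : U' -> U'')
  (g' : V' -> V'') (t : seq (U * V)) :
  tmap (f' \o f) (g' \o g) t = tmap f' g' (tmap f g t).
Proof. by rewrite /tmap -map_comp. Qed.

Lemma eq_tmap (f f' : U -> U') (g g' : V -> V') :
  f =1 f' -> g =1 g' -> tmap f g =1 tmap f' g'.
Proof. by move=> ff' gg' t; apply: eq_map => p; rewrite /= ff' gg'. Qed.

End TensorMap.

Section TensorEquality.
Variable k : fieldType.

Lemma teq_sym (U V : lmodType k) (t u : seq (U * V)) : teq t u -> teq u t.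
Proof. by move=> tu f g; rewrite tu. Qed.

Lemma teq_trans (U V : lmodType k) (t u v : seq (U * V)) :
  teq t u -> teq u v -> teq t v.
Proof. by move=> tu uv f g; rewrite tu uv. Qed.

Lemma teq_tmap_inj_bilinear (U V U' V' : lmodType k) (i : U -> U') (j : V -> V')
  (t u : seq (U * V)) :
  klinear i -> injective i -> klinear j -> injective j ->
  teq (tmap i j t) (tmap i j u) ->
  forall (Z : lmodType k) (beta : U -> V -> Z),
  (forall y, klinear (beta^~ y)) -> (forall x, klinear (beta x)) ->
  \sum_(p <- t) beta p.1 p.2 = \sum_(p <- u) beta p.1 p.2.
Proof.
move=> il i_inj jl j_inj tu Z beta betal betar; apply/eqP.
rewrite -subr_eq0 -big_tdiff => [|p]; last by rewrite /= (klinearN (betar _)).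
apply/eqP.
apply: (@bilinear_seq_sum_eq0 _ _ _ _ _ i setT il i_inj _ beta) => // F.
apply: j_inj; rewrite (klinear0 jl) (klinear_sum jl).
apply: scalars_separate => G.
rewrite linear_sum big_tdiff => [|p]; last first.
  by rewrite /= scalerN (klinearN jl) linearN.
have tpairE s : \sum_(p <- s) G (j (F (i p.1) *: p.2)) = tpair F G (tmap i j s).
  by rewrite /tpair big_map; apply: eq_bigr => p _; rewrite (klinearZ jl) linearZ.
by rewrite !tpairE tu subrr.
Qed.

Lemma teq_bilinear (U V : lmodType k) (t u : seq (U * V)) : teq t u ->
  forall (Z : lmodType k) (beta : U -> V -> Z),
  (forall y, klinear (beta^~ y)) -> (forall x, klinear (beta x)) ->
  \sum_(p <- t) beta p.1 p.2 = \sum_(p <- u) beta p.1 p.2.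
Proof.
move=> tu; apply: (@teq_tmap_inj_bilinear U V U V id id) => //.
by rewrite !tmap_id.
Qed.

Lemma teq_tmap (U V U' V' : lmodType k) (f : U -> U') (g : V -> V')
  (t u : seq (U * V)) :
  klinear f -> klinear g -> teq t u -> teq (tmap f g t) (tmap f g u).
Proof.
move=> fl gl tu F G; rewrite /tpair !big_map.
apply: (teq_bilinear tu (beta := fun a b => F (f a) * G (g b) : k^o)).
- by move=> b a x y; rewrite fl linearP /= mulrDl -mulrA.
- by move=> a c x y; rewrite gl linearP /= mulrDr mulrCA.
Qed.

Lemma teq_tmap_inj (U V U' V' : lmodType k) (i : U -> U') (j : V -> V')
  (t u : seq (U * V)) :
  klinear i -> injective i -> klinear j -> injective j ->
  teq (tmap i j t) (tmap i j u) -> teq t u.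
Proof.
move=> il i_inj jl j_inj tu F G.
apply: (teq_tmap_inj_bilinear il i_inj jl j_inj tu
  (beta := fun a b => F a * G b : k^o)).
- by move=> b a x y; rewrite linearP /= mulrDl -mulrA.
- by move=> a c x y; rewrite linearP /= mulrDr mulrCA.
Qed.

(* Contract the first factor against scalars, which leaves a two-factor tensor,
   then apply the bilinear criterion with values in the space of linear maps
   [U -> Z]. *)
Lemma teq3_trilinear (U V W Z : lmodType k) (t u : seq (U * V * W)) :
  teq3 t u ->
  forall g : U -> V -> W -> Z,
  (forall y z, klinear (fun x => g x y z)) ->
  (forall x z, klinear (fun y => g x y z)) -> (forall x y, klinear (g x y)) ->
  \sum_(p <- t) g p.1.1 p.1.2 p.2 = \sum_(p <- u) g p.1.1 p.1.2 p.2.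
Proof.
move=> tu g g1 g2 g3; apply/eqP.
rewrite -subr_eq0 -big_tdiff => [|p]; last by rewrite /= (klinearN (g3 _ _)).
have d0 (f : {scalar U}) (h1 : {scalar V}) (h2 : {scalar W}) :
    \sum_(p <- tdiff t u) f p.1.1 * h1 p.1.2 * h2 p.2 = 0.
  by rewrite big_tdiff ?tu ?subrr // => p; rewrite /= linearN mulrN.
have contract1 (F : {scalar U}) x :
    \sum_(p <- tdiff t u) F p.1.1 *: g x p.1.2 p.2 = 0.
  pose d := [seq (p.1.2, F p.1.1 *: p.2) | p <- tdiff t u].
  have d_teq0 : teq d [::].
    move=> h1 h2; rewrite /tpair big_nil big_map -[RHS](d0 F h1 h2).
    by apply: eq_bigr => p _; rewrite linearZ /= mulrCA mulrA.
  have := teq_bilinear d_teq0 (g2 x) (g3 x); rewrite big_nil big_map => E.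
  by rewrite -[RHS]E; apply: eq_bigr => p _; rewrite (klinearZ (g3 _ _)).
pose d := [seq (p.1.1, fun x => g x p.1.2 p.2) | p <- tdiff t u].
apply/eqP; have -> :
    \sum_(p <- tdiff t u) g p.1.1 p.1.2 p.2 = \sum_(p <- d) p.2 p.1.
  by rewrite big_map.
apply: (@bilinear_seq_sum_eq0 _ U U (U -> Z) Z id (@klinear _ U Z)
  (fun _ _ _ => erefl) (fun _ _ => id) _ (fun x phi => phi x)) => //.
- move=> a phi psi phil psil b x y.
  by rewrite !fctE phil psil !scalerDr !scalerA mulrC addrACA.
- by move=> p /mapP [q _ ->]; apply: g1.
- move=> F; rewrite big_map; apply/funext => x.
  by rewrite fct_sumE; apply: contract1.
Qed.

End TensorEquality.

Lemma inj_surj_bijective (T1 T2 : Type) (f : T1 -> T2) :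
  injective f -> (forall y, exists x, f x = y) -> bijective f.
Proof.
move=> finj fsurj; rewrite -setTT_bijective; split => [//|x y _ _ /finj //|y _].
by have [x fx] := fsurj y; exists x.
Qed.

Section HopfMaps.
Variable k : fieldType.
Implicit Types A B C : algType k.

Lemma hopf_map_comp A B C (HA : hopf_alg A) (HB : hopf_alg B) (HC : hopf_alg C)
  (w : A -> B) (v : B -> C) :
  hopf_map HA HB w -> hopf_map HB HC v -> hopf_map HA HC (v \o w).
Proof.
case=> wl w1 wM wD we [vl v1 vM vD ve]; split => /=.
- by move=> a x y /=; rewrite wl vl.
- by rewrite w1 v1.
- by move=> x y; rewrite wM vM.
- move=> x; rewrite tmap_comp.
  exact: teq_trans (vD _) (teq_tmap vl vl (wD x)).
- by move=> x; rewrite ve we.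
Qed.

Section Antipode.
Variables (A B : algType k) (HA : hopf_alg A) (HB : hopf_alg B) (w : A -> B).
Hypothesis wH : hopf_map HA HB w.

Lemma hopf_map_antipodeL x :
  \sum_(p <- comul HA x) antipode HB (w p.1) * w p.2 = (counit HA x)%:A.
Proof.
case: wH => _ _ _ wD we; rewrite -we -(antipodeL HB (w x)).
rewrite (teq_bilinear (wD x) (beta := fun a b => antipode HB a * b)) ?big_map //.
- by move=> b a u u'; rewrite (antipode_lin HB) mulrDl scalerAl.
- by move=> u a b b'; rewrite mulrDr scalerAr.
Qed.

(* Both sides are the convolution product (S_B w) * w * (w S_A) evaluated at x,
   bracketed in the two possible ways. *)
Lemma hopf_map_antipode x : antipode HB (w x) = w (antipode HA x).
Proof.
have [wl w1 wM _ _] := wH.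
have Sl := antipode_lin HA; have SBl := antipode_lin HB.
have -> : w (antipode HA x) = \sum_(p <- comul HA x) \sum_(q <- comul HA p.1)
    antipode HB (w q.1) * w q.2 * w (antipode HA p.2).
  rewrite -{1}(counitL HA x) (klinear_sum Sl) (klinear_sum wl).
  apply: eq_bigr => p _.
  by rewrite -mulr_suml hopf_map_antipodeL mulr_algl (klinearZ Sl) (klinearZ wl).
have -> : antipode HB (w x) = \sum_(p <- comul HA x) \sum_(q <- comul HA p.2)
    antipode HB (w p.1) * w q.1 * w (antipode HA q.2).
  rewrite -{1}(counitR HA x) (klinear_sum wl) (klinear_sum SBl).
  apply: eq_bigr => p _; rewrite (klinearZ wl) (klinearZ SBl).
  under eq_bigr do rewrite -mulrA -wM.
  rewrite -mulr_sumr -(klinear_sum wl) (antipodeR HA) (klinearZ wl) w1.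
  by rewrite mulr_algr.
have := teq3_trilinear (coassoc HA x)
  (g := fun a b c => antipode HB (w a) * w b * w (antipode HA c)).
rewrite !big_allpairs_dep /= => -> //.
- by move=> b c a u u'; rewrite wl SBl !mulrDl !scalerAl.
- by move=> u c a b b'; rewrite wl mulrDr mulrDl -scalerAr -scalerAl.
- by move=> u b a c c'; rewrite Sl wl mulrDr scalerAr.
Qed.

End Antipode.

Lemma hopf_iso_inv A B (HA : hopf_alg A) (HB : hopf_alg B) (w : A -> B) :
  hopf_iso HA HB w -> exists g, [/\ hopf_iso HB HA g, cancel w g & cancel g w].
Proof.
case=> [[wl w1 wM wD we] [g wg gw]].
have gl : klinear g by move=> a y y'; rewrite -{1}(gw y) -{1}(gw y') -wl wg.
exists g; split => //; split; last by exists w.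
split => //.
- by rewrite -w1 wg.
- by move=> y y'; rewrite -{1}(gw y) -{1}(gw y') -wM wg.
- move=> y; apply: teq_sym; have := teq_tmap gl gl (wD (g y)).
  by rewrite -tmap_comp (eq_tmap wg wg) tmap_id gw.
- by move=> y; rewrite -{2}(gw y) we.
Qed.

Lemma central_hopf_subalg_image A B (HA : hopf_alg A) (HB : hopf_alg B)
  (w : A -> B) (P : A -> Prop) :
  hopf_iso HA HB w -> central_hopf_subalg HA P ->
  central_hopf_subalg HB (fun y => exists x, P x /\ y = w x).
Proof.
move=> wiso; have [g [_ _ gw]] := hopf_iso_inv wiso; have [wH _] := wiso.
have [wl w1 wM wD _] := wH; case=> P1 Pcl PM PD Pc; split.
- by exists 1; rewrite w1.
- move=> a _ _ [x [Px ->]] [y [Py ->]].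
  by exists (a *: x + y); rewrite wl; split => //; apply: Pcl.
- move=> _ _ [x [Px ->]] [y [Py ->]].
  by exists (x * y); rewrite wM; split => //; apply: PM.
- move=> _ [x [Px ->]]; have [[t [tP te]] PS] := PD x Px; split.
    exists (tmap w w t); split; last exact: teq_trans (wD x) (teq_tmap wl wl te).
    move=> _ /mapP [p pt ->] /=; have [Pp1 Pp2] := tP p pt.
    by split; [exists p.1 | exists p.2].
  by exists (antipode HA x); rewrite (hopf_map_antipode wH).
- by move=> _ z [x [Px ->]]; rewrite -(gw z) -wM Pc // wM.
Qed.

Lemma hopf_center_image A B (HA : hopf_alg A) (HB : hopf_alg B) (w : A -> B)
  (P : A -> Prop) (Q : B -> Prop) :
  hopf_iso HA HB w -> central_hopf_subalg HA P -> is_hopf_center HB Q ->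
  forall x, P x -> Q (w x).
Proof.
move=> wiso Pc [_ Qmax] x Px.
by apply: (Qmax _ (central_hopf_subalg_image wiso Pc)); exists x.
Qed.

Lemma hopf_map_factor_inj (K1 K2 A : algType k)
  (HK1 : hopf_alg K1) (HK2 : hopf_alg K2) (HA : hopf_alg A)
  (iota : K2 -> A) (f : K1 -> A) (u : K1 -> K2) :
  hopf_map HK2 HA iota -> injective iota -> hopf_map HK1 HA f ->
  (forall x, iota (u x) = f x) -> hopf_map HK1 HK2 u.
Proof.
case=> il i1 iM iD ie iinj [fl f1 fM fD fe] iu; split.
- by move=> a x y; apply: iinj; rewrite il !iu fl.
- by apply: iinj; rewrite iu f1 i1.
- by move=> x y; apply: iinj; rewrite iM !iu fM.
- move=> x; apply: (teq_tmap_inj il iinj il iinj).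
  apply: teq_trans (teq_sym (iD _)) _.
  by rewrite -tmap_comp (eq_tmap iu iu) iu; apply: fD.
- by move=> x; rewrite -ie iu fe.
Qed.

Lemma in_AKplus_map (K L A B : algType k) (HK : hopf_alg K)
  (HL : hopf_alg L) (iota : K -> A) (iota' : L -> B) (w : A -> B) (u : K -> L) :
  klinear w -> (forall x y, w (x * y) = w x * w y) ->
  (forall x, counit HL (u x) = counit HK x) ->
  (forall x, iota' (u x) = w (iota x)) ->
  forall a, in_AKplus HK iota a -> in_AKplus HL iota' (w a).
Proof.
move=> wl wM ue iu a [s [s0 ->]]; exists [seq (w p.1, u p.2) | p <- s]; split.
  by move=> _ /mapP [p ps ->] /=; rewrite ue s0.
by rewrite (klinear_sum wl) big_map; apply: eq_bigr => p _; rewrite wM iu.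
Qed.

End HopfMaps.

Section Factorization.
Variable k : fieldType.

Lemma exists_factor_surj (A H1 H2 : lmodType k) (pi : A -> H1) (f : A -> H2) :
  klinear pi -> klinear f -> (forall h, exists a, pi a = h) ->
  (forall a, pi a = 0 -> f a = 0) ->
  exists v : H1 -> H2, forall a, v (pi a) = f a.
Proof.
move=> pl fl psurj ker_sub; exists (fun h => f (sval (cid (psurj h)))) => a.
case: cid => b /= pba; apply/eqP; rewrite -subr_eq0 -(klinearB fl).
by rewrite ker_sub // (klinearB pl) pba subrr.
Qed.

Variables (A H1 H2 : algType k) (HA : hopf_alg A) (HH1 : hopf_alg H1).
Variables (HH2 : hopf_alg H2) (pi : A -> H1) (f : A -> H2) (v : H1 -> H2).
Hypotheses (piH : hopf_map HA HH1 pi) (pi_surj : forall h, exists a, pi a = h).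
Hypotheses (fH : hopf_map HA HH2 f) (vpi : forall a, v (pi a) = f a).

Lemma hopf_map_factor_surj : hopf_map HH1 HH2 v.
Proof.
case: piH => pl p1 pM pD pe; case: fH => fl f1 fM fD fe.
have vl : klinear v.
  move=> a h h'; have [x <-] := pi_surj h; have [y <-] := pi_surj h'.
  by rewrite -pl !vpi fl.
split => //.
- by rewrite -p1 vpi f1.
- move=> h h'; have [x <-] := pi_surj h; have [y <-] := pi_surj h'.
  by rewrite -pM !vpi fM.
- move=> h; have [a <-] := pi_surj h; rewrite vpi.
  apply: teq_trans (fD a) _; rewrite -(eq_tmap vpi vpi) tmap_comp.
  exact/teq_sym/(teq_tmap vl vl (pD a)).
- by move=> h; have [a <-] := pi_surj h; rewrite vpi fe pe.
Qed.

End Factorization.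

Section Isomorphisms.
Variable k : fieldType.

Lemma hopf_iso_restrict (K1 K2 A1 A2 : algType k)
  (HK1 : hopf_alg K1) (HK2 : hopf_alg K2) (HA1 : hopf_alg A1) (HA2 : hopf_alg A2)
  (iota1 : K1 -> A1) (iota2 : K2 -> A2) (omega : A1 -> A2) :
  hopf_map HK1 HA1 iota1 -> injective iota1 ->
  hopf_map HK2 HA2 iota2 -> injective iota2 -> hopf_iso HA1 HA2 omega ->
  (forall x, exists y, omega (iota1 x) = iota2 y) ->
  (forall y, exists x, omega (iota1 x) = iota2 y) ->
  exists u, hopf_iso HK1 HK2 u /\ forall x, iota2 (u x) = omega (iota1 x).
Proof.
move=> i1H i1inj i2H i2inj [wH [g wg _]] into onto.
pose u x := sval (cid (into x)).
have iu x : iota2 (u x) = omega (iota1 x) by rewrite /u; case: cid.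
exists u; split => //; split.
  exact: (hopf_map_factor_inj i2H i2inj (hopf_map_comp i1H wH)).
apply: inj_surj_bijective.
  by move=> x y /(congr1 iota2); rewrite !iu => /(can_inj wg)/i1inj.
by move=> y; have [x E] := onto y; exists x; apply: i2inj; rewrite iu.
Qed.

Lemma hopf_iso_quotient (K1 A1 H1 K2 A2 H2 : algType k)
  (HK1 : hopf_alg K1) (HA1 : hopf_alg A1) (HH1 : hopf_alg H1)
  (HK2 : hopf_alg K2) (HA2 : hopf_alg A2) (HH2 : hopf_alg H2)
  (iota1 : K1 -> A1) (pi1 : A1 -> H1) (iota2 : K2 -> A2) (pi2 : A2 -> H2)
  (omega : A1 -> A2) (u : K1 -> K2) :
  exact_seq HK1 HA1 HH1 iota1 pi1 -> exact_seq HK2 HA2 HH2 iota2 pi2 ->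
  hopf_iso HA1 HA2 omega -> hopf_iso HK1 HK2 u ->
  (forall x, iota2 (u x) = omega (iota1 x)) ->
  exists v, hopf_iso HH1 HH2 v /\ forall a, pi2 (omega a) = v (pi1 a).
Proof.
move=> [_ p1H _ p1surj [ker1 _]] [_ p2H _ p2surj [ker2 _]] wiso uiso iu.
have [g [[[gl _ gM _ _] _] wg gw]] := hopf_iso_inv wiso.
have [u' [[[_ _ _ _ u'e] _] _ u'u]] := hopf_iso_inv uiso.
have [[wH _] [[_ _ _ _ ue] _]] := (wiso, uiso); have [wl _ wM _ _] := wH.
have [p1l _ _ _ _] := p1H; have [p2l _ _ _ _] := p2H.
have iu' y : iota1 (u' y) = g (iota2 y).
  by apply: (can_inj wg); rewrite -iu u'u gw.
have [v pv] : exists v, forall a, v (pi1 a) = pi2 (omega a).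
  apply: (exists_factor_surj p1l _ p1surj) => [b x y|a /ker1 Ka].
    by rewrite wl p2l.
  exact/ker2/(in_AKplus_map wl wM ue iu).
exists v; split; last by move=> a; rewrite pv.
split; first exact: (hopf_map_factor_surj p1H p1surj (hopf_map_comp wH p2H) pv).
apply: inj_surj_bijective => [h h'|h2].
  have [a <-] := p1surj h; have [b <-] := p1surj h'; rewrite !pv => E.
  apply/eqP; rewrite -subr_eq0 -(klinearB p1l); apply/eqP/ker1.
  rewrite -[a - b]wg; apply: (in_AKplus_map gl gM u'e iu'); apply/ker2.
  by rewrite (klinearB wl) (klinearB p2l) E subrr.
by have [a2 <-] := p2surj h2; exists (pi1 (g a2)); rewrite pv gw.
Qed.

End Isomorphisms.

Theorem proposition2p10 (k : fieldType)
  (K1 A1 H1 K2 A2 H2 : algType k)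
  (HK1 : hopf_alg K1) (HA1 : hopf_alg A1) (HH1 : hopf_alg H1)
  (HK2 : hopf_alg K2) (HA2 : hopf_alg A2) (HH2 : hopf_alg H2)
  (iota1 : K1 -> A1) (pi1 : A1 -> H1) (iota2 : K2 -> A2) (pi2 : A2 -> H2)
  (ex1 : exact_seq HK1 HA1 HH1 iota1 pi1)
  (ex2 : exact_seq HK2 HA2 HH2 iota2 pi2)
  (hz1 : is_hopf_center HA1 (fun a => exists b, a = iota1 b))
  (hz2 : is_hopf_center HA2 (fun a => exists b, a = iota2 b))
  (omega : A1 -> A2) (homega : hopf_iso HA1 HA2 omega) :
  exists (omega_u : K1 -> K2) (omega_o : H1 -> H2),
    [/\ hopf_iso HK1 HK2 omega_u, hopf_iso HH1 HH2 omega_o,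
        (forall x, iota2 (omega_u x) = omega (iota1 x))
      & (forall a, pi2 (omega a) = omega_o (pi1 a))].
Proof.
have [i1H _ i1inj _ _] := ex1; have [i2H _ i2inj _ _] := ex2.
have [g [giso _ gw]] := hopf_iso_inv homega.
have [u [uiso iu]] :
    exists u, hopf_iso HK1 HK2 u /\ forall x, iota2 (u x) = omega (iota1 x).
  apply: (hopf_iso_restrict i1H i1inj i2H i2inj homega) => [x|y].
    by apply: (hopf_center_image homega hz1.1 hz2); exists x.
  have [x gy] := hopf_center_image giso hz2.1 hz1 (ex_intro _ y erefl).
  by exists x; rewrite -gy gw.
have [v [viso pv]] := hopf_iso_quotient ex1 ex2 homega uiso iu.
by exists u, v.
Qed.
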